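(* Assume Assumption A and let $p\ge2$. There is a constant $C=C(b,\sigma,T,p)$ such that (i) $\mathbb{E}|X^n_{t_l}-T_{m,\pm}X^n_{t_l}|^p\le Ch^{p/2}$ for $1\le l,m\le n$; (ii) $\mathbb{E}\Big|\nabla X^{n,t_k,X^n_{t_k}}_{t_m}-\dfrac{\mathcal D^n_{k+1}X^n_{t_m}}{\sigma(t_{k+1},X^n_{t_k})}\Big|^p\le Ch^{p/2}$ for $0\le k<m\le n$; (iii) $\mathbb{E}|\mathcal D^n_kX^n_{t_m}|^p\le C$ for $1\le k\le m\le n$.
   Context: Fix $T>0$, $n$, $h=T/n$, $t_j=jh$. Assumption A: $b,\sigma:[0,T]\times\mathbb{R}\to\mathbb{R}$ and their first and second space derivatives are continuous and bounded, these derivatives locally $\gamma$-Hölder in the parabolic metric, $b,\sigma$ $\tfrac12$-Hölder in time uniformly in space, $\sigma\ge\delta>0$. $(\varepsilon_i)_{i=1}^n$ i.i.d. Rademacher. $X^n_{t_0}=x$, $X^n_{t_k}=x+h\sum_{j=1}^kb(t_j,X^n_{t_{j-1}})+\sqrt h\sum_{j=1}^k\sigma(t_j,X^n_{t_{j-1}})\varepsilon_j$. For $x'\in\mathbb{R}$, $X^{n,t_k,x'}_{t_m}$ ($m\ge k$) is the same recursion started at time $t_k$ from $x'$ with $\varepsilon_{k+1},\dots,\varepsilon_m$, and $\nabla X^{n,t_k,x'}_{t_m}=1+h\sum_{l=k+1}^mb_x(t_l,X^{n,t_k,x'}_{t_{l-1}})\nabla X^{n,t_k,x'}_{t_{l-1}}+\sqrt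 h\sum_{l=k+1}^m\sigma_x(t_l,X^{n,t_k,x'}_{t_{l-1}})\nabla X^{n,t_k,x'}_{t_{l-1}}\varepsilon_l$. For $\xi=F(\varepsilon_1,\dots,\varepsilon_n)$: $T_{m,\pm}\xi:=F(\varepsilon_1,\dots,\varepsilon_{m-1},\pm1,\varepsilon_{m+1},\dots,\varepsilon_n)$ and $\mathcal D^n_m\xi:=(T_{m,+}\xi-T_{m,-}\xi)/(2\sqrt h)$. *)

From Stdlib Require Import Reals Lra.
Open Scope R_scope.

(* x^a for x>0, and 0 for x<=0 (so that 0^a = 0, a>0). *)
Definition rpow (x a : R) : R := if Rlt_dec 0 x then Rpower x a else 0.

(* Sign sequences: eps j for j >= 1 are the Rademacher variables. *)
Definition upd (e : nat -> R) (k : nat) (v : R) : nat -> R :=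
  fun j => if Nat.eq_dec j k then v else e j.

(* Expectation over i.i.d. Rademacher eps_1..eps_k (uniform average over
   all 2^k sign choices); other indices are set to 0 (irrelevant). *)
Fixpoint Erad (k : nat) (F : (nat -> R) -> R) : R :=
  match k with
  | O => F (fun _ => 0)
  | S k' => Erad k' (fun e => (F (upd e (S k') 1) + F (upd e (S k') (-1))) / 2)
  end.

Definition step (T : R) (n : nat) : R := T / INR n.
Definition tj (T : R) (n j : nat) : R := INR j * step T n.

(* Xfrom T n b s k x e j  =  X^{n,t_k,x}_{t_(k+j)} *)
Fixpoint Xfrom (T : R) (n : nat) (b s : R -> R -> R) (k : nat) (x : R)
  (e : nat -> R) (j : nat) : R :=
  match j with
  | O => x
  | S j' => let y := Xfrom T n b s k x e j' in
            y + step T n * b (tj T n (k + S j')) y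
              + sqrt (step T n) * s (tj T n (k + S j')) y * e (k + S j')%nat
  end.

Definition Xn T n b s x e l := Xfrom T n b s 0 x e l.

(* NablaFrom T n b s bx sx k x e j = nabla X^{n,t_k,x}_{t_(k+j)} *)
Fixpoint NablaFrom (T : R) (n : nat) (b s bx sx : R -> R -> R) (k : nat) (x : R)
  (e : nat -> R) (j : nat) : R :=
  match j with
  | O => 1
  | S j' => let y := Xfrom T n b s k x e j' in
            let g := NablaFrom T n b s bx sx k x e j' in
            g + step T n * bx (tj T n (k + S j')) y * g
              + sqrt (step T n) * sx (tj T n (k + S j')) y * g * e (k + S j')%nat
  end.

Definition Tshift (m : nat) (v : R) (F : (nat -> R) -> R) : (nat -> R) -> R :=
  fun e => F (upd e m v).
Definition Dmal (T : R) (n m : nat) (F : (nat -> R) -> R) : (nat -> R) -> R :=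
  fun e => (F (upd e m 1) - F (upd e m (-1))) / (2 * sqrt (step T n)).

Definition bounded_on (T : R) (f : R -> R -> R) : Prop :=
  exists K, forall t x, 0 <= t <= T -> Rabs (f t x) <= K.

Definition cont_on (T : R) (f : R -> R -> R) : Prop :=
  forall t x, 0 <= t <= T -> forall eta, eta > 0 -> exists d, d > 0 /\
    forall t' x', 0 <= t' <= T -> Rabs (t' - t) < d -> Rabs (x' - x) < d ->
      Rabs (f t' x' - f t x) < eta.

Definition loc_holder_par (T gamma : R) (f : R -> R -> R) : Prop :=
  forall M, M > 0 -> exists L, forall t s x y, 0 <= t <= T -> 0 <= s <= T ->
    Rabs x <= M -> Rabs y <= M ->
    Rabs (f t x - f s y) <= L * rpow (sqrt (Rabs (t - s)) + Rabs (x - y)) gamma.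

Definition half_holder_time (T : R) (f : R -> R -> R) : Prop :=
  exists L, forall t s x, 0 <= t <= T -> 0 <= s <= T ->
    Rabs (f t x - f s x) <= L * sqrt (Rabs (t - s)).

Definition space_derivs (T : R) (f fx fxx : R -> R -> R) : Prop :=
  forall t x, 0 <= t <= T ->
    derivable_pt_lim (fun y => f t y) x (fx t x) /\
    derivable_pt_lim (fun y => fx t y) x (fxx t x).

Definition AssumptionA (T gamma delta : R) (b bx bxx s sx sxx : R -> R -> R) : Prop :=
  0 < gamma <= 1 /\ 0 < delta /\
  space_derivs T b bx bxx /\ space_derivs T s sx sxx /\
  cont_on T b /\ cont_on T bx /\ cont_on T bxx /\
  cont_on T s /\ cont_on T sx /\ cont_on T sxx /\
  bounded_on T b /\ bounded_on T bx /\ bounded_on T bxx /\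
  bounded_on T s /\ bounded_on T sx /\ bounded_on T sxx /\
  loc_holder_par T gamma bx /\ loc_holder_par T gamma bxx /\
  loc_holder_par T gamma sx /\ loc_holder_par T gamma sxx /\
  half_holder_time T b /\ half_holder_time T s /\
  (forall t x, 0 <= t <= T -> s t x >= delta).

From Stdlib Require Import Reals Lra Lia FunctionalExtensionality.
Open Scope R_scope.

(* Each quantity, rescaled by 1/sqrt h in (i) and (ii), is the final value of
   a process Y_j obeying a perturbed linear recursion
     Y_{j+1} = Y_j + h a + sqrt h c eps_{j+1} - r1 - r2 eps_{j+1},
     |a|, |c| <= K |Y_j|,  |r1| <= h G_j,  |r2| <= sqrt h G_j:
   in (i) and (iii) the gap between two Euler paths whose noises differ at a
   single step (G = 0); in (ii) the tangent process minus D X / sigma, forced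
   by second order Taylor remainders of size G ~ (D X)^2.  Bonami's two-point
   inequality E (A + B eps)^(2N) <= (A^2 + M_r B^2)^N, N = 2^r, bounds the
   one-step growth of the moment of order 2N, and a discrete Gronwall argument
   bounds that moment uniformly in the mesh; real moments of order p <= 2N
   follow. *)

(** * Rademacher expectation *)

Definition signs (k : nat) (e : nat -> R) : Prop :=
  forall i, (1 <= i <= k)%nat -> e i = 1 \/ e i = -1.

Lemma upd_same e k v : upd e k v k = v.
Proof. unfold upd; destruct (Nat.eq_dec k k); congruence. Qed.

Lemma upd_other e k v i : i <> k -> upd e k v i = e i.
Proof. intros; unfold upd; destruct (Nat.eq_dec i k); congruence. Qed.

Lemma upd_self e k : upd e k (e k) = e.
Proof.
  apply functional_extensionality; intros i; unfold upd.
  destruct (Nat.eq_dec i k); congruence.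
Qed.

Lemma upd_comm e j v k w : j <> k -> upd (upd e j v) k w = upd (upd e k w) j v.
Proof.
  intros Hjk; apply functional_extensionality; intros i; unfold upd.
  destruct (Nat.eq_dec i k), (Nat.eq_dec i j); congruence.
Qed.

Lemma signs_upd k e w : signs k e -> (w = 1 \/ w = -1) -> signs (S k) (upd e (S k) w).
Proof.
  intros He Hw i Hi. destruct (Nat.eq_dec i (S k)) as [->|Hne].
  - rewrite upd_same; auto.
  - rewrite upd_other by auto. apply He; lia.
Qed.

Lemma sign_abs_le1 w : (w = 1 \/ w = -1) -> Rabs w <= 1.
Proof. intros [-> | ->]; unfold Rabs; destruct Rcase_abs; lra. Qed.

Definition avg (j : nat) (F : (nat -> R) -> R) (e : nat -> R) : R :=
  (F (upd e j 1) + F (upd e j (-1))) / 2.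

Lemma Erad_le k : forall F G, (forall e, signs k e -> F e <= G e) -> Erad k F <= Erad k G.
Proof.
  induction k as [|k IH]; intros F G H; simpl.
  - apply H. intros i Hi; lia.
  - apply IH. intros e He.
    pose proof (H _ (signs_upd k e 1 He (or_introl eq_refl))).
    pose proof (H _ (signs_upd k e (-1) He (or_intror eq_refl))). lra.
Qed.

Lemma Erad_ext k F G : (forall e, signs k e -> F e = G e) -> Erad k F = Erad k G.
Proof. intros H; apply Rle_antisym; apply Erad_le; intros e He; rewrite H; auto; lra. Qed.

Lemma Erad_affine k : forall (a : R) F G,
  Erad k (fun e => a * F e + G e) = a * Erad k F + Erad k G.
Proof.
  induction k as [|k IH]; intros a F G; simpl; auto.
  rewrite <- IH. apply Erad_ext; intros; lra.
Qed.

Lemma Erad_const k : forall c, Erad k (fun _ => c) = c.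
Proof.
  induction k as [|k IH]; intros c; simpl; auto.
  replace ((c + c) / 2) with c by lra. apply IH.
Qed.

Lemma Erad_scal k a F : Erad k (fun e => a * F e) = a * Erad k F.
Proof.
  rewrite <- (Rplus_0_r (a * Erad k F)), <- (Erad_const k 0), <- Erad_affine.
  apply Erad_ext; intros; lra.
Qed.

Lemma Erad_plus_const k c F : Erad k (fun e => c + F e) = c + Erad k F.
Proof.
  rewrite <- (Rmult_1_l (Erad k F)), <- (Erad_const k c) at 1.
  rewrite Rplus_comm, <- Erad_affine. apply Erad_ext; intros; lra.
Qed.

Lemma Erad_ge0 k F : (forall e, signs k e -> 0 <= F e) -> 0 <= Erad k F.
Proof. intros H. rewrite <- (Erad_const k 0). apply Erad_le; auto. Qed.

Lemma Erad_indep m n F : (m <= n)%nat ->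
  (forall j e v, (m < j <= n)%nat -> F (upd e j v) = F e) -> Erad n F = Erad m F.
Proof.
  induction n as [|n IH]; intros Hmn H.
  - replace m with 0%nat by lia; auto.
  - destruct (Nat.eq_dec m (S n)) as [->|Hne]; auto.
    simpl. rewrite <- IH by (try lia; intros; apply H; lia).
    apply Erad_ext; intros e _. rewrite !H by lia. lra.
Qed.

Lemma Erad_gronwall (G : nat -> (nat -> R) -> R) (j0 M : nat) (a c : R) :
  1 <= a -> 0 <= c ->
  (forall j, (j0 <= j < M)%nat -> exists B : (nat -> R) -> R, Erad j B <= c /\
     forall e, signs j e -> avg (S j) (G (S j)) e <= a * G j e + B e) ->
  forall m, (j0 <= m <= M)%nat ->
  Erad m (G m) <= a ^ (m - j0) * (Erad j0 (G j0) + INR (m - j0) * c).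
Proof.
  intros Ha Hc Hstep m Hm. induction m as [|m IH].
  - replace j0 with 0%nat by lia. simpl. lra.
  - destruct (Nat.eq_dec j0 (S m)) as [<-|Hne].
    + rewrite Nat.sub_diag. simpl. lra.
    + destruct (Hstep m ltac:(lia)) as [B [HB Hs]].
      assert (IHm := IH ltac:(lia)).
      apply Rle_trans with (a * Erad m (G m) + Erad m B).
      { simpl. rewrite <- Erad_affine. apply Erad_le. exact Hs. }
      replace (S m - j0)%nat with (S (m - j0)) by lia.
      rewrite S_INR, <- tech_pow_Rmult.
      assert (1 <= a ^ (m - j0)) by (apply pow_R1_Rle; lra).
      pose proof (pos_INR (m - j0)).
      set (E := Erad m (G m)) in *. set (Q := a ^ (m - j0)) in *.
      apply Rle_trans with (a * (Q * (Erad j0 (G j0) + INR (m - j0) * c)) + c).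
      * apply Rplus_le_compat; [apply Rmult_le_compat_l|]; lra.
      * assert (1 <= a * Q) by nra. nra.
Qed.

Fixpoint bonami_const (r : nat) : R :=
  match r with O => 1 | S r' => 1 + 2 * bonami_const r' end.

Lemma bonami_const_ge1 r : 1 <= bonami_const r.
Proof. induction r; simpl; lra. Qed.

Lemma pow2_S r : (2 ^ S r = 2 * 2 ^ r)%nat.
Proof. simpl. lia. Qed.

Lemma two_point_moment r : forall A B : R,
  (((A + B) ^ 2) ^ (2 ^ r) + ((A - B) ^ 2) ^ (2 ^ r)) / 2
  <= (A ^ 2 + bonami_const r * B ^ 2) ^ (2 ^ r).
Proof.
  induction r as [|r IH]; intros A B.
  - simpl. nra.
  - rewrite pow2_S, !pow_mult.
    replace (((A + B) ^ 2) ^ 2) with (((A^2 + B^2) + 2*A*B) ^ 2) by ring.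
    replace (((A - B) ^ 2) ^ 2) with (((A^2 + B^2) - 2*A*B) ^ 2) by ring.
    eapply Rle_trans; [apply IH|]. apply pow_incr. simpl bonami_const.
    pose proof (bonami_const_ge1 r).
    assert (0 <= A^2*B^2) by nra. assert (0 <= B^2*B^2) by nra. split; nra.
Qed.

Lemma sq_le_of_abs_le u v : Rabs u <= v -> u ^ 2 <= v ^ 2.
Proof. intros H. rewrite <- (pow2_abs u). apply pow_incr. split; auto. apply Rabs_pos. Qed.

Lemma sq_sub_le u v h : 0 < h -> (u - v) ^ 2 <= (1 + h) * u ^ 2 + (1 + / h) * v ^ 2.
Proof.
  intros Hh.
  assert (E : (1 + h) * u ^ 2 + (1 + / h) * v ^ 2 - (u - v) ^ 2 = (h * u + v) ^ 2 / h)
    by (field; lra).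
  assert (0 <= (h * u + v) ^ 2 / h)
    by (unfold Rdiv; apply Rmult_le_pos; [apply pow2_ge_0 | left; apply Rinv_0_lt_compat; lra]).
  lra.
Qed.

(* Equivalently (x + y)^N <= (1 + h)^(N-1) x^N + (1 + 1/h)^(N-1) y^N; the
   factor (1 + h) keeps the statement stable under squaring. *)
Lemma pow_add_le_split r : forall x y h, 0 <= x -> 0 <= y -> 0 < h ->
  (1 + h) * (x + y) ^ (2 ^ r)
  <= (1 + h) ^ (2 ^ r) * x ^ (2 ^ r) + h * (1 + / h) ^ (2 ^ r) * y ^ (2 ^ r).
Proof.
  induction r as [|r IH]; intros x y h Hx Hy Hh.
  - simpl. replace (h * ((1 + / h) * 1)) with (h + 1) by (field; lra). nra.
  - rewrite pow2_S, Nat.mul_comm, !pow_mult.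
    set (a := (1 + h) ^ 2 ^ r). set (b := (1 + / h) ^ 2 ^ r).
    set (X := x ^ 2 ^ r). set (Y := y ^ 2 ^ r).
    assert (IHr := IH x y h Hx Hy Hh). fold a b X Y in IHr.
    assert (0 <= (x + y) ^ 2 ^ r) by (apply pow_le; lra).
    assert (0 <= a * X) by (apply Rmult_le_pos; apply pow_le; lra).
    assert (0 < / h) by (apply Rinv_0_lt_compat; lra).
    assert (0 <= h * b * Y)
      by (apply Rmult_le_pos; [apply Rmult_le_pos; [|apply pow_le]|apply pow_le]; lra).
    assert (((1 + h) * (x + y) ^ 2 ^ r) ^ 2 <= (a * X + h * b * Y) ^ 2)
      by (apply pow_incr; split; [apply Rmult_le_pos|]; lra).
    assert (Hsq := sq_sub_le (a * X) (- (h * b * Y)) h Hh).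
    replace (a * X - - (h * b * Y)) with (a * X + h * b * Y) in Hsq by ring.
    apply Rmult_le_reg_l with (1 + h); [lra|].
    replace ((1 + h) * ((1 + h) * ((x + y) ^ 2 ^ r) ^ 2))
      with (((1 + h) * (x + y) ^ 2 ^ r) ^ 2) by ring.
    eapply Rle_trans; [eassumption|]. eapply Rle_trans; [exact Hsq|]. right.
    field. lra.
Qed.

Lemma pow_le_exp a x k : 0 <= a -> a <= exp x -> a ^ k <= exp (x * INR k).
Proof.
  intros H0 H1. induction k as [|k IH].
  - simpl. rewrite Rmult_0_r, exp_0. lra.
  - rewrite S_INR, <- tech_pow_Rmult.
    replace (x * (INR k + 1)) with (x + x * INR k) by ring. rewrite exp_plus.
    apply Rmult_le_compat; auto. apply pow_le; auto.
Qed.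

Lemma exp_le_exp_compat x y : x <= y -> exp x <= exp y.
Proof. intros [H|H]; [left; apply exp_increasing; auto | subst; lra]. Qed.

Lemma growth_factor_le_exp h K M : 0 <= h -> 0 <= K -> 0 <= M ->
  (1 + h) * ((1 + h) * (1 + h * K) ^ 2 + 2 * M * h * K ^ 2)
  <= exp (h * (2 + 2 * K + 2 * M * K ^ 2)).
Proof.
  intros Hh HK HM.
  pose proof (exp_ineq1_le h) as Eh. pose proof (exp_ineq1_le (h * K)) as EK.
  pose proof (exp_ineq1_le (2 * M * h * K ^ 2)) as EM.
  assert (0 <= 2 * M * h * K ^ 2) by (apply Rmult_le_pos; [nra | apply pow2_ge_0]).
  assert (Hq : 1 <= (1 + h) * (1 + h * K) ^ 2).
  { assert (1 <= (1 + h * K) ^ 2) by (apply pow_R1_Rle; nra). nra. }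
  assert ((1 + h) * (1 + h * K) ^ 2 <= exp h * exp (h * K) ^ 2).
  { apply Rmult_le_compat; [lra | apply pow2_ge_0 | lra | apply pow_incr; nra]. }
  replace (exp (h * (2 + 2 * K + 2 * M * K ^ 2)))
    with (exp h * ((exp h * exp (h * K) ^ 2) * exp (2 * M * h * K ^ 2))).
  2:{ replace (h * (2 + 2 * K + 2 * M * K ^ 2))
        with (h + ((h + (h * K + h * K)) + 2 * M * h * K ^ 2)) by ring.
      rewrite !exp_plus. ring. }
  apply Rmult_le_compat; [lra | nra | lra |].
  apply Rle_trans with (((1 + h) * (1 + h * K) ^ 2) * (1 + 2 * M * h * K ^ 2)); [nra|].
  apply Rmult_le_compat; lra.
Qed.

Lemma rpow_ge0 u p : 0 <= rpow u p.
Proof. unfold rpow. destruct (Rlt_dec 0 u); [left; apply exp_pos | lra]. Qed.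

Lemma rpow_le_1_plus_pow u p (N : nat) : 0 <= u -> 0 < p -> p <= INR N ->
  rpow u p <= 1 + u ^ N.
Proof.
  intros Hu Hp HN. pose proof (pow_le u N Hu). unfold rpow.
  destruct (Rlt_dec 0 u) as [Hu'|]; [|lra].
  destruct (Rle_lt_dec 1 u) as [H1|H1].
  - rewrite <- Rpower_pow by lra.
    assert (Rpower u p <= Rpower u (INR N)) by (apply Rle_Rpower; lra). lra.
  - unfold Rpower. assert (ln u < 0) by (rewrite <- ln_1; apply ln_increasing; lra).
    assert (exp (p * ln u) <= 1) by (rewrite <- exp_0; left; apply exp_increasing; nra).
    lra.
Qed.

Lemma rpow_abs_le (z p : R) (N : nat) : 0 < p -> p <= 2 * INR N ->
  rpow (Rabs z) p <= 1 + (z ^ 2) ^ N.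
Proof.
  intros Hp HN. rewrite <- pow2_abs, <- pow_mult.
  apply rpow_le_1_plus_pow; [apply Rabs_pos | lra |].
  rewrite mult_INR. simpl (INR 2). lra.
Qed.

Lemma rpow_sqrt_mul h u p : 0 < h -> 0 <= u -> rpow (sqrt h * u) p = rpow h (p / 2) * rpow u p.
Proof.
  intros Hh [Hu | <-].
  - assert (Hs : 0 < sqrt h) by (apply sqrt_lt_R0; lra).
    unfold rpow. destruct (Rlt_dec 0 (sqrt h * u)) as [_|C]; [|exfalso; apply C; nra].
    destruct (Rlt_dec 0 h) as [_|]; [|lra]. destruct (Rlt_dec 0 u) as [_|]; [|lra].
    rewrite <- Rpower_mult_distr, <- Rpower_sqrt, Rpower_mult by lra.
    do 2 f_equal. field.
  - rewrite Rmult_0_r. unfold rpow at 1 3. destruct (Rlt_dec 0 0); [lra | ring].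
Qed.

Lemma rpow_abs_sqrt_mul_le (h y p : R) (N : nat) : 0 < h -> 0 < p -> p <= 2 * INR N ->
  rpow (Rabs (sqrt h * y)) p <= rpow h (p / 2) * (1 + (y ^ 2) ^ N).
Proof.
  intros Hh Hp HN.
  rewrite Rabs_mult, (Rabs_pos_eq (sqrt h)) by apply sqrt_pos.
  rewrite rpow_sqrt_mul by (auto; apply Rabs_pos).
  apply Rmult_le_compat_l; [apply rpow_ge0 | apply rpow_abs_le; auto].
Qed.

(** * Moments of randomly perturbed linear recursions *)

Definition moment_growth (K : R) (r : nat) : R := 2 + 2 * K + 2 * bonami_const r * K ^ 2.

Definition moment_const (tau K : R) (r : nat) (c0 B : R) : R :=
  exp (tau * moment_growth K r * INR (2 ^ r)) *
  ((c0 ^ 2) ^ (2 ^ r) + tau * ((1 + tau) * (1 + tau + 2 * bonami_const r)) ^ (2 ^ r) * B).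

Lemma moment_const_ge0 tau K r c0 B : 0 <= tau -> 0 <= B -> 0 <= moment_const tau K r c0 B.
Proof.
  intros Ht HB. unfold moment_const. pose proof (bonami_const_ge1 r).
  apply Rmult_le_pos; [left; apply exp_pos|].
  apply Rplus_le_le_0_compat; [apply pow_le, pow2_ge_0|].
  apply Rmult_le_pos; [apply Rmult_le_pos; [|apply pow_le; apply Rmult_le_pos]|]; lra.
Qed.

Lemma one_step_moment_le (r : nat) (h K y al be r1 r2 g : R) : 0 < h -> 0 <= K ->
  Rabs al <= K * Rabs y -> Rabs be <= K * Rabs y ->
  Rabs r1 <= h * g -> Rabs r2 <= sqrt h * g ->
  (((y + h * al + sqrt h * be * 1 - r1 - r2 * 1) ^ 2) ^ (2 ^ r)
   + ((y + h * al + sqrt h * be * -1 - r1 - r2 * -1) ^ 2) ^ (2 ^ r)) / 2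
  <= ((1 + h) * ((1 + h) * (1 + h * K) ^ 2 + 2 * bonami_const r * h * K ^ 2)) ^ (2 ^ r)
     * (y ^ 2) ^ (2 ^ r)
   + h * ((1 + h) * (1 + h + 2 * bonami_const r)) ^ (2 ^ r) * (g ^ 2) ^ (2 ^ r).
Proof.
  intros Hh HK Hal Hbe Hr1 Hr2.
  set (N := (2 ^ r)%nat). set (M := bonami_const r).
  assert (HM : 1 <= M) by apply bonami_const_ge1.
  assert (Hsh : sqrt h ^ 2 = h) by (apply pow2_sqrt; lra).
  set (A := y + h * al - r1). set (B := sqrt h * be - r2).
  replace (y + h * al + sqrt h * be * 1 - r1 - r2 * 1) with (A + B) by (unfold A, B; ring).
  replace (y + h * al + sqrt h * be * -1 - r1 - r2 * -1) with (A - B) by (unfold A, B; ring).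
  eapply Rle_trans; [apply two_point_moment|]. fold N M.
  assert (HA : A ^ 2 <= (1 + h) * (1 + h * K) ^ 2 * y ^ 2 + (1 + h) * h * g ^ 2).
  { eapply Rle_trans; [apply sq_sub_le, Hh|].
    assert ((y + h * al) ^ 2 <= (1 + h * K) ^ 2 * y ^ 2).
    { rewrite <- (pow2_abs y), <- Rpow_mult_distr. apply sq_le_of_abs_le.
      eapply Rle_trans; [apply Rabs_triang|].
      rewrite Rabs_mult, (Rabs_pos_eq h) by lra. nra. }
    assert (r1 ^ 2 <= (h * g) ^ 2) by (apply sq_le_of_abs_le; auto).
    assert (0 < / h) by (apply Rinv_0_lt_compat; lra).
    replace ((1 + h) * h * g ^ 2) with ((1 + / h) * (h * g) ^ 2) by (field; lra).
    apply Rplus_le_compat; [rewrite Rmult_assoc|]; apply Rmult_le_compat_l; lra. }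
  assert (HB : B ^ 2 <= 2 * h * K ^ 2 * y ^ 2 + 2 * h * g ^ 2).
  { assert (be ^ 2 <= K ^ 2 * y ^ 2).
    { rewrite <- (pow2_abs y), <- Rpow_mult_distr. apply sq_le_of_abs_le; auto. }
    assert (r2 ^ 2 <= h * g ^ 2).
    { rewrite <- Hsh, <- Rpow_mult_distr. apply sq_le_of_abs_le; auto. }
    assert ((sqrt h * be) ^ 2 <= h * (K ^ 2 * y ^ 2))
      by (rewrite Rpow_mult_distr, Hsh; apply Rmult_le_compat_l; lra).
    assert (0 <= (sqrt h * be + r2) ^ 2) by apply pow2_ge_0. unfold B. nra. }
  assert (0 <= (1 + h * K) ^ 2) by apply pow2_ge_0.
  assert (0 <= M * h * K ^ 2) by (apply Rmult_le_pos; [nra | apply pow2_ge_0]).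
  set (x := ((1 + h) * (1 + h * K) ^ 2 + 2 * M * h * K ^ 2) * y ^ 2).
  set (z := h * (1 + h + 2 * M) * g ^ 2).
  assert (Hx : 0 <= x) by (unfold x; apply Rmult_le_pos; [nra | apply pow2_ge_0]).
  assert (Hz : 0 <= z) by (unfold z; apply Rmult_le_pos; [nra | apply pow2_ge_0]).
  assert (HP : (A ^ 2 + M * B ^ 2) ^ N <= (x + z) ^ N).
  { apply pow_incr. pose proof (pow2_ge_0 A). pose proof (pow2_ge_0 B).
    split; [nra|]. unfold x, z. nra. }
  assert (HC := pow_add_le_split r x z h Hx Hz Hh). fold N in HC.
  assert (0 <= (x + z) ^ N) by (apply pow_le; lra).
  eapply Rle_trans; [exact HP|]. apply Rle_trans with
    ((1 + h) ^ N * x ^ N + h * (1 + / h) ^ N * z ^ N); [nra|].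
  assert (Eh : (1 + / h) ^ N * h ^ N = (1 + h) ^ N).
  { rewrite <- Rpow_mult_distr. f_equal. field. lra. }
  apply Req_le. unfold x, z. rewrite !Rpow_mult_distr, <- Eh. ring.
Qed.

Lemma linear_recursion_moment (Y G : nat -> (nat -> R) -> R) (j0 M : nat)
  (h tau K c0 B : R) (r : nat) :
  0 < h -> h <= tau -> h * INR (M - j0) <= tau -> 0 <= K -> 0 <= c0 -> 0 <= B ->
  (forall e, signs j0 e -> Rabs (Y j0 e) <= c0) ->
  (forall j, (j0 <= j < M)%nat -> Erad j (fun e => (G j e ^ 2) ^ (2 ^ r)) <= B) ->
  (forall j, (j0 <= j < M)%nat -> forall e, signs j e -> exists al be r1 r2,
     Rabs al <= K * Rabs (Y j e) /\ Rabs be <= K * Rabs (Y j e) /\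
     Rabs r1 <= h * G j e /\ Rabs r2 <= sqrt h * G j e /\
     forall w, (w = 1 \/ w = -1) ->
       Y (S j) (upd e (S j) w) = Y j e + h * al + sqrt h * be * w - r1 - r2 * w) ->
  forall m, (j0 <= m <= M)%nat ->
  Erad m (fun e => (Y m e ^ 2) ^ (2 ^ r)) <= moment_const tau K r c0 B.
Proof.
  intros Hh Hht HhM HK Hc0 HB H0 HG Hs m Hm.
  set (N := (2 ^ r)%nat). set (Mr := bonami_const r).
  assert (HMr : 1 <= Mr) by apply bonami_const_ge1.
  set (base := (1 + h) * ((1 + h) * (1 + h * K) ^ 2 + 2 * Mr * h * K ^ 2)).
  assert (Hbase : 1 <= base).
  { assert (1 <= (1 + h * K) ^ 2) by (apply pow_R1_Rle; nra).
    assert (0 <= 2 * Mr * h * K ^ 2) by (apply Rmult_le_pos; [nra | apply pow2_ge_0]).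
    unfold base. nra. }
  set (a := base ^ N).
  set (lam := (1 + h) * (1 + h + 2 * Mr)).
  assert (Hlam : 0 <= lam) by (unfold lam; nra).
  assert (Ha : 1 <= a) by (apply pow_R1_Rle; lra).
  assert (Hc : 0 <= h * lam ^ N * B)
    by (apply Rmult_le_pos; [apply Rmult_le_pos; [lra | apply pow_le]|]; lra).
  pose proof (pos_INR (m - j0)).
  assert (Hhm : h * INR (m - j0) <= tau).
  { eapply Rle_trans; [|exact HhM]. apply Rmult_le_compat_l; [lra | apply le_INR; lia]. }
  eapply Rle_trans.
  { apply (Erad_gronwall (fun j e => (Y j e ^ 2) ^ N) j0 M a (h * lam ^ N * B) Ha Hc); auto.
    intros j Hj. exists (fun e => h * lam ^ N * (G j e ^ 2) ^ N). split.
    { rewrite Erad_scal. apply Rmult_le_compat_l; [|apply HG]; auto.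
      apply Rmult_le_pos; [lra | apply pow_le; lra]. }
    intros e He. destruct (Hs j Hj e He) as [al [be [r1 [r2 [Hal [Hbe [Hr1 [Hr2 Hrec]]]]]]]].
    unfold avg. rewrite !Hrec by auto. apply one_step_moment_le; auto. }
  unfold moment_const, moment_growth. fold N Mr.
  apply Rmult_le_compat.
  - apply pow_le; lra.
  - apply Rplus_le_le_0_compat; [apply Erad_ge0; intros; apply pow_le, pow2_ge_0 | nra].
  - unfold a. rewrite <- pow_mult. eapply Rle_trans.
    { apply pow_le_exp; [lra | unfold base; apply growth_factor_le_exp; lra]. }
    apply exp_le_exp_compat. rewrite mult_INR.
    pose proof (pos_INR N). assert (0 <= 2 + 2 * K + 2 * Mr * K ^ 2) by nra.
    replace (h * (2 + 2 * K + 2 * Mr * K ^ 2) * (INR N * INR (m - j0)))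
      with ((h * INR (m - j0)) * ((2 + 2 * K + 2 * Mr * K ^ 2) * INR N)) by ring.
    replace (tau * (2 + 2 * K + 2 * Mr * K ^ 2) * INR N)
      with (tau * ((2 + 2 * K + 2 * Mr * K ^ 2) * INR N)) by ring.
    apply Rmult_le_compat_r; nra.
  - apply Rplus_le_compat.
    + rewrite <- (Erad_const j0 ((c0 ^ 2) ^ N)). apply Erad_le. intros e He.
      apply pow_incr. split; [apply pow2_ge_0 | apply sq_le_of_abs_le; auto].
    + replace (INR (m - j0) * (h * lam ^ N * B)) with ((h * INR (m - j0)) * (lam ^ N * B)) by ring.
      rewrite (Rmult_assoc tau). apply Rmult_le_compat; [nra | |exact Hhm|].
      * apply Rmult_le_pos; [apply pow_le|]; lra.
      * apply Rmult_le_compat_r; [lra|]. apply pow_incr. split; [exact Hlam|]. unfold lam.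
        apply Rmult_le_compat; lra.
Qed.

Lemma linear_recursion_moment_hom (Y : nat -> (nat -> R) -> R) (j0 M : nat)
  (h tau K c0 : R) (r : nat) :
  0 < h -> h <= tau -> h * INR (M - j0) <= tau -> 0 <= K -> 0 <= c0 ->
  (forall e, signs j0 e -> Rabs (Y j0 e) <= c0) ->
  (forall j, (j0 <= j < M)%nat -> forall e, signs j e -> exists al be,
     Rabs al <= K * Rabs (Y j e) /\ Rabs be <= K * Rabs (Y j e) /\
     forall w, (w = 1 \/ w = -1) -> Y (S j) (upd e (S j) w) = Y j e + h * al + sqrt h * be * w) ->
  forall m, (j0 <= m <= M)%nat ->
  Erad m (fun e => (Y m e ^ 2) ^ (2 ^ r)) <= moment_const tau K r c0 0.
Proof.
  intros Hh Hht HhM HK Hc0 H0 Hs.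
  apply (linear_recursion_moment Y (fun _ _ => 0) j0 M h tau K c0 0 r); auto; try lra.
  - intros j _. rewrite pow_i, pow_i by (try pose proof (Nat.pow_nonzero 2 r); lia).
    rewrite Erad_const. lra.
  - intros j Hj e He. destruct (Hs j Hj e He) as [al [be [Hal [Hbe Hrec]]]].
    exists al, be, 0, 0. rewrite Rabs_R0, !Rmult_0_r.
    repeat split; auto; try lra. intros w Hw. rewrite Hrec by auto. ring.
Qed.

Lemma exists_pow2_ge p : exists r : nat, p <= 2 * INR (2 ^ r).
Proof.
  destruct (INR_unbounded p) as [r Hr]. exists r.
  assert (INR r <= INR (2 ^ r)) by (apply le_INR, Nat.lt_le_incl, Nat.pow_gt_lin_r; lia).
  pose proof (pos_INR r). lra.
Qed.

Lemma Erad_rpow_sqrt_le (k r : nat) (h p B : R) (Z Y : (nat -> R) -> R) :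
  0 < h -> 0 < p -> p <= 2 * INR (2 ^ r) -> (forall e, Z e = sqrt h * Y e) ->
  Erad k (fun e => (Y e ^ 2) ^ (2 ^ r)) <= B ->
  Erad k (fun e => rpow (Rabs (Z e)) p) <= (1 + B) * rpow h (p / 2).
Proof.
  intros Hh Hp Hr HZ HB.
  apply Rle_trans with (Erad k (fun e => rpow h (p / 2) * (1 + (Y e ^ 2) ^ (2 ^ r)))).
  - apply Erad_le. intros e _. rewrite HZ. apply rpow_abs_sqrt_mul_le; auto.
  - rewrite Erad_scal, Erad_plus_const, Rmult_comm.
    apply Rmult_le_compat_r; [apply rpow_ge0 | lra].
Qed.

(** * The Euler scheme and its tangent process *)

Lemma step_pos T n : 0 < T -> (1 <= n)%nat -> 0 < step T n.
Proof. intros. unfold step. apply Rdiv_lt_0_compat; auto. apply lt_0_INR; lia. Qed.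

Lemma step_mul_le T n j : 0 < T -> (1 <= n)%nat -> (j <= n)%nat -> step T n * INR j <= T.
Proof.
  intros HT Hn Hj. unfold step. assert (1 <= INR n) by (apply (le_INR 1); lia).
  assert (INR j <= INR n) by (apply le_INR; lia).
  replace T with (T / INR n * INR n) at 2 by (field; lra).
  apply Rmult_le_compat_l; [|lra]. left. apply Rdiv_lt_0_compat; lra.
Qed.

Lemma step_le T n : 0 < T -> (1 <= n)%nat -> step T n <= T.
Proof. intros. rewrite <- (Rmult_1_r (step T n)). apply (step_mul_le T n 1); auto. Qed.

Lemma tj_range T n j : 0 < T -> (1 <= n)%nat -> (j <= n)%nat -> 0 <= tj T n j <= T.
Proof.
  intros. unfold tj. split.
  - apply Rmult_le_pos; [apply pos_INR | left; apply step_pos; auto].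
  - rewrite Rmult_comm. apply step_mul_le; auto.
Qed.

Section EulerScheme.

Variables (T : R) (n : nat) (b s bx sx : R -> R -> R).

Definition euler (j : nat) (y w : R) : R :=
  y + step T n * b (tj T n j) y + sqrt (step T n) * s (tj T n j) y * w.

Lemma Xfrom_ext k x e e' j : (forall i, (i <= k + j)%nat -> e i = e' i) ->
  Xfrom T n b s k x e j = Xfrom T n b s k x e' j.
Proof.
  induction j as [|j IH]; intros H; simpl; auto.
  rewrite IH by (intros; apply H; lia). rewrite H by lia. reflexivity.
Qed.

Lemma NablaFrom_ext k x e e' j : (forall i, (i <= k + j)%nat -> e i = e' i) ->
  NablaFrom T n b s bx sx k x e j = NablaFrom T n b s bx sx k x e' j.
Proof.
  induction j as [|j IH]; intros H; simpl; auto.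
  rewrite IH, (Xfrom_ext k x e e' j), H by (intros; try apply H; lia). reflexivity.
Qed.

Lemma Xn_upd_after x e i v l : (l < i)%nat -> Xn T n b s x (upd e i v) l = Xn T n b s x e l.
Proof. intros; apply Xfrom_ext; intros; apply upd_other; lia. Qed.

Lemma NablaFrom_upd_after k x e i v j : (k + j < i)%nat ->
  NablaFrom T n b s bx sx k x (upd e i v) j = NablaFrom T n b s bx sx k x e j.
Proof. intros; apply NablaFrom_ext; intros; apply upd_other; lia. Qed.

Lemma Xn_shift x e k i :
  Xn T n b s x e (k + i) = Xfrom T n b s k (Xn T n b s x e k) e i.
Proof.
  induction i as [|i IH].
  - rewrite Nat.add_0_r; reflexivity.
  - rewrite <- plus_n_Sm. simpl. rewrite <- IH, <- plus_n_Sm. reflexivity.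
Qed.

Lemma Xn_upd_succ x e j w :
  Xn T n b s x (upd e (S j) w) (S j) = euler (S j) (Xn T n b s x e j) w.
Proof.
  unfold Xn. simpl. rewrite upd_same, (Xfrom_ext 0 x (upd e (S j) w) e j)
    by (intros; apply upd_other; lia).
  reflexivity.
Qed.

Lemma NablaFrom_upd_succ x k e j w : (k <= j)%nat ->
  NablaFrom T n b s bx sx k (Xn T n b s x (upd e (S j) w) k) (upd e (S j) w) (S j - k)
  = NablaFrom T n b s bx sx k (Xn T n b s x e k) e (j - k)
    * (1 + step T n * bx (tj T n (S j)) (Xn T n b s x e j)
         + sqrt (step T n) * sx (tj T n (S j)) (Xn T n b s x e j) * w).
Proof.
  intros Hkj. rewrite Xn_upd_after by lia.
  replace (S j - k)%nat with (S (j - k)) by lia. simpl.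
  replace (k + S (j - k))%nat with (S j) by lia.
  rewrite upd_same, NablaFrom_upd_after, (Xfrom_ext k _ (upd e (S j) w) e (j - k))
    by (intros; try apply upd_other; lia).
  replace (Xfrom T n b s k (Xn T n b s x e k) e (j - k)) with (Xn T n b s x e j)
    by (rewrite <- Xn_shift; f_equal; lia).
  ring.
Qed.

Definition commutes_after (k : nat) (phi : (nat -> R) -> nat -> R) : Prop :=
  forall i e w, (k < i)%nat -> phi (upd e i w) = upd (phi e) i w.

Lemma commutes_after_id k : commutes_after k (fun e => e).
Proof. intros i e w _. reflexivity. Qed.

Lemma commutes_after_upd k k' v : (k' <= k)%nat -> commutes_after k (fun e => upd e k' v).
Proof. intros Hk i e w Hi. apply upd_comm. lia. Qed.

Definition path_gap (x : R) (phi1 phi2 : (nat -> R) -> nat -> R) (c : (nat -> R) -> R)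
  (j : nat) (e : nat -> R) : R :=
  (Xn T n b s x (phi1 e) j - Xn T n b s x (phi2 e) j) * c e.

Lemma path_gap_upd_after x phi1 phi2 c k l e i v :
  commutes_after k phi1 -> commutes_after k phi2 ->
  (forall e, c (upd e i v) = c e) -> (k < i)%nat -> (l < i)%nat ->
  path_gap x phi1 phi2 c l (upd e i v) = path_gap x phi1 phi2 c l e.
Proof.
  intros H1 H2 Hc Hki Hli. unfold path_gap.
  rewrite H1, H2, Hc, !Xn_upd_after by auto. reflexivity.
Qed.

Lemma path_gap_recursion (K x : R) phi1 phi2 c k j e :
  (forall y z, Rabs (b (tj T n (S j)) y - b (tj T n (S j)) z) <= K * Rabs (y - z)) ->
  (forall y z, Rabs (s (tj T n (S j)) y - s (tj T n (S j)) z) <= K * Rabs (y - z)) ->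
  commutes_after k phi1 -> commutes_after k phi2 ->
  (forall e w, c (upd e (S j) w) = c e) -> (k <= j)%nat -> 0 < c e ->
  exists al be,
    Rabs al <= K * Rabs (path_gap x phi1 phi2 c j e) /\
    Rabs be <= K * Rabs (path_gap x phi1 phi2 c j e) /\
    forall w, path_gap x phi1 phi2 c (S j) (upd e (S j) w)
      = path_gap x phi1 phi2 c j e + step T n * al + sqrt (step T n) * be * w.
Proof.
  intros Hb Hs H1 H2 Hc Hkj Hce. unfold path_gap.
  set (y1 := Xn T n b s x (phi1 e) j). set (y2 := Xn T n b s x (phi2 e) j).
  set (t := tj T n (S j)).
  exists ((b t y1 - b t y2) * c e), ((s t y1 - s t y2) * c e).
  rewrite !Rabs_mult, (Rabs_pos_eq (c e)), <- !Rmult_assoc by lra.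
  split; [|split]; [apply Rmult_le_compat_r; [lra | first [apply Hb | apply Hs]] ..|].
  intros w. rewrite H1, H2, Hc, !Xn_upd_succ by lia. unfold euler. fold y1 y2 t. ring.
Qed.

End EulerScheme.

Record coeff_bounds (T K : R) (b bx s sx : R -> R -> R) : Prop := {
  K_pos : 0 < K;
  b_lip : forall t, 0 <= t <= T -> forall y z, Rabs (b t y - b t z) <= K * Rabs (y - z);
  s_lip : forall t, 0 <= t <= T -> forall y z, Rabs (s t y - s t z) <= K * Rabs (y - z);
  b_taylor : forall t, 0 <= t <= T -> forall y z,
    Rabs (b t y - b t z - bx t z * (y - z)) <= K * (y - z) ^ 2;
  s_taylor : forall t, 0 <= t <= T -> forall y z,
    Rabs (s t y - s t z - sx t z * (y - z)) <= K * (y - z) ^ 2;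
  bx_bound : forall t y, 0 <= t <= T -> Rabs (bx t y) <= K;
  sx_bound : forall t y, 0 <= t <= T -> Rabs (sx t y) <= K;
  s_bound : forall t y, 0 <= t <= T -> Rabs (s t y) <= K;
  s_pos : forall t y, 0 <= t <= T -> 0 < s t y }.

Lemma lipschitz_of_deriv_bound (f fx : R -> R) (K : R) :
  (forall y, derivable_pt_lim f y (fx y)) -> (forall y, Rabs (fx y) <= K) ->
  forall y z, Rabs (f y - f z) <= K * Rabs (y - z).
Proof.
  intros Hd Hb y z. destruct (MVT_abs f fx z y) as [c [Hc _]].
  - intros; apply Hd.
  - rewrite Hc. apply Rmult_le_compat_r; [apply Rabs_pos | apply Hb].
Qed.

Lemma taylor_remainder_le (f fx fxx : R -> R) (K : R) :
  (forall y, derivable_pt_lim f y (fx y)) -> (forall y, derivable_pt_lim fx y (fxx y)) ->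
  (forall y, Rabs (fxx y) <= K) ->
  forall y z, Rabs (f y - f z - fx z * (y - z)) <= K * (y - z) ^ 2.
Proof.
  intros Hd Hd2 Hb y z.
  destruct (MVT_abs (fun u => f u - fx z * u) (fun u => fx u - fx z) z y) as [c [Hc Hcr]].
  - intros c _. replace (fx c - fx z) with (fx c - fx z * 1) by ring.
    apply derivable_pt_lim_minus; auto.
    apply derivable_pt_lim_scal with (f := id). apply derivable_pt_lim_id.
  - replace (f y - f z - fx z * (y - z)) with (f y - fx z * y - (f z - fx z * z)) by ring.
    rewrite Hc.
    assert (Hl := lipschitz_of_deriv_bound fx fxx K Hd2 Hb c z).
    assert (Rabs (c - z) <= Rabs (y - z)).
    { unfold Rmin, Rmax in Hcr. destruct (Rle_dec z y); unfold Rabs; repeat destruct Rcase_abs; lra. }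
    assert (0 <= K) by (pose proof (Hb y); pose proof (Rabs_pos (fxx y)); lra).
    rewrite <- (pow2_abs (y - z)). pose proof (Rabs_pos (y - z)).
    apply Rle_trans with (K * Rabs (c - z) * Rabs (y - z)); [apply Rmult_le_compat_r; auto|].
    rewrite Rmult_assoc. apply Rmult_le_compat_l; [lra|]. simpl. nra.
Qed.

Lemma taylor_remainder_endpoint (f fx : R -> R) K Xp Xm X0 : (X0 = Xp \/ X0 = Xm) ->
  (forall y z, Rabs (f y - f z - fx z * (y - z)) <= K * (y - z) ^ 2) ->
  Rabs (f Xp - f Xm - fx X0 * (Xp - Xm)) <= K * (Xp - Xm) ^ 2.
Proof.
  intros [-> | ->] H; [|apply H].
  replace (f Xp - f Xm - fx Xp * (Xp - Xm)) with (- (f Xm - f Xp - fx Xp * (Xm - Xp))) by ring.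
  rewrite Rabs_Ropp. replace ((Xp - Xm) ^ 2) with ((Xm - Xp) ^ 2) by ring. apply H.
Qed.

Lemma remainder_div_le (R0 q sg c u K : R) : 0 < q -> 0 < c -> 0 < sg <= K ->
  Rabs R0 <= K * (2 * q * sg * u) ^ 2 ->
  Rabs (R0 / (2 * c * sg)) <= q ^ 2 / c * (2 * K ^ 2 * u ^ 2).
Proof.
  intros Hq Hc Hsg HR. assert (0 < 2 * c * sg) by nra.
  apply Rmult_le_reg_r with (2 * c * sg); [lra|].
  unfold Rdiv at 1. rewrite Rabs_mult, Rabs_inv, (Rabs_pos_eq (2 * c * sg)) by lra.
  rewrite Rmult_assoc, Rinv_l, Rmult_1_r by lra.
  replace (q ^ 2 / c * (2 * K ^ 2 * u ^ 2) * (2 * c * sg))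
    with (4 * K * q ^ 2 * sg * u ^ 2 * K) by (field; lra).
  eapply Rle_trans; [exact HR|].
  replace (K * (2 * q * sg * u) ^ 2) with (4 * K * q ^ 2 * sg * u ^ 2 * sg) by ring.
  apply Rmult_le_compat_l; [|lra].
  assert (0 <= q ^ 2 * sg * u ^ 2) by (apply Rmult_le_pos; [nra | apply pow2_ge_0]).
  pose proof (Rle_trans _ _ _ (Rabs_pos R0) HR). nra.
Qed.

Lemma coeff_bounds_of_assumptionA T gamma delta b bx bxx s sx sxx :
  AssumptionA T gamma delta b bx bxx s sx sxx -> exists K, coeff_bounds T K b bx s sx.
Proof.
  intros (_ & Hdelta & Hdb & Hds & _ & _ & _ & _ & _ & _ & _ & [Kbx Hbx] & [Kbxx Hbxx] &
          [Ks Hs] & [Ksx Hsx] & [Ksxx Hsxx] & _ & _ & _ & _ & _ & _ & Hsd).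
  set (K := 1 + Rabs Kbx + Rabs Kbxx + Rabs Ks + Rabs Ksx + Rabs Ksxx).
  pose proof (Rle_abs Kbx). pose proof (Rle_abs Kbxx). pose proof (Rle_abs Ks).
  pose proof (Rle_abs Ksx). pose proof (Rle_abs Ksxx).
  pose proof (Rabs_pos Kbx). pose proof (Rabs_pos Kbxx). pose proof (Rabs_pos Ks).
  pose proof (Rabs_pos Ksx). pose proof (Rabs_pos Ksxx).
  assert (Bbx : forall t y, 0 <= t <= T -> Rabs (bx t y) <= K)
    by (intros t y Ht; pose proof (Hbx t y Ht); unfold K; lra).
  assert (Bbxx : forall t y, 0 <= t <= T -> Rabs (bxx t y) <= K)
    by (intros t y Ht; pose proof (Hbxx t y Ht); unfold K; lra).
  assert (Bsx : forall t y, 0 <= t <= T -> Rabs (sx t y) <= K)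
    by (intros t y Ht; pose proof (Hsx t y Ht); unfold K; lra).
  assert (Bsxx : forall t y, 0 <= t <= T -> Rabs (sxx t y) <= K)
    by (intros t y Ht; pose proof (Hsxx t y Ht); unfold K; lra).
  exists K. split.
  - unfold K; lra.
  - intros t Ht. apply lipschitz_of_deriv_bound with (fx := bx t); intros y;
      [apply (Hdb t y Ht) | auto].
  - intros t Ht. apply lipschitz_of_deriv_bound with (fx := sx t); intros y;
      [apply (Hds t y Ht) | auto].
  - intros t Ht. apply taylor_remainder_le with (fxx := bxx t); intros y;
      [apply (Hdb t y Ht) .. | auto].
  - intros t Ht. apply taylor_remainder_le with (fxx := sxx t); intros y;
      [apply (Hds t y Ht) .. | auto].
  - exact Bbx.
  - exact Bsx.
  - intros t y Ht. pose proof (Hs t y Ht). unfold K; lra.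
  - intros t y Ht. pose proof (Hsd t y Ht). lra.
Qed.

Lemma flip_moment T K b bx s sx p : 0 < T -> coeff_bounds T K b bx s sx -> 0 < p ->
  exists C, forall (n : nat) (x : R), (1 <= n)%nat ->
  forall l m : nat, (1 <= l <= n)%nat -> (1 <= m <= n)%nat ->
  forall v : R, (v = 1 \/ v = -1) ->
  Erad n (fun e => rpow (Rabs (Xn T n b s x e l
                               - Tshift m v (fun e' => Xn T n b s x e' l) e)) p)
    <= C * rpow (step T n) (p / 2).
Proof.
  intros HT HC Hp. destruct (exists_pow2_ge p) as [r Hr]. pose proof (K_pos _ _ _ _ _ _ HC).
  set (B := moment_const T K r (2 * K) 0).
  assert (HB : 0 <= B) by (apply moment_const_ge0; lra).
  exists (1 + B). intros n x Hn l m Hl Hm v Hv. unfold Tshift.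
  set (h := step T n). assert (Hh : 0 < h) by (apply step_pos; auto).
  assert (Hsh : 0 < sqrt h) by (apply sqrt_lt_R0; lra).
  destruct (Nat.lt_ge_cases l m) as [Hlm|Hml].
  { apply Rle_trans with 0; [|apply Rmult_le_pos; [lra | apply rpow_ge0]].
    right. rewrite <- (Erad_const n 0). apply Erad_ext. intros e _.
    rewrite Xn_upd_after, Rminus_diag, Rabs_R0 by lia.
    unfold rpow. destruct (Rlt_dec 0 0); [lra | auto]. }
  set (Y := path_gap T n b s x (fun e => e) (fun e => upd e m v) (fun _ => / sqrt h)).
  apply (Erad_rpow_sqrt_le n r h p B _ (Y l)); auto.
  { intros e. unfold Y, path_gap. field. lra. }
  rewrite (Erad_indep l n) by (try lia; intros; unfold Y;
    rewrite (path_gap_upd_after _ _ _ _ _ _ _ _ m);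
    auto using commutes_after_id, commutes_after_upd; lia).
  destruct m as [|m']; [lia|].
  apply (linear_recursion_moment_hom Y (S m') l h T K (2 * K) r); auto;
    try apply step_le; try lia; try lra.
  - apply step_mul_le; auto; lia.
  - intros e He. unfold Y, path_gap.
    replace (Xn T n b s x e (S m')) with (Xn T n b s x (upd e (S m') (e (S m'))) (S m'))
      by (rewrite upd_self; reflexivity).
    rewrite !Xn_upd_succ. unfold euler.
    fold h. replace (_ * / sqrt h) with ((e (S m') - v) * s (tj T n (S m')) (Xn T n b s x e m'))
      by (field; lra).
    rewrite Rabs_mult. apply Rmult_le_compat; try apply Rabs_pos.
    + destruct (He (S m') ltac:(lia)) as [-> | ->]; destruct Hv as [-> | ->];
        unfold Rabs; destruct Rcase_abs; lra.
    + apply (s_bound _ _ _ _ _ _ HC). apply tj_range; auto; lia.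
  - intros j Hj e _. assert (Ht := tj_range T n (S j) HT Hn ltac:(lia)).
    destruct (path_gap_recursion T n b s K x (fun e => e) (fun e => upd e (S m') v)
      (fun _ => / sqrt h) (S m') j e (b_lip _ _ _ _ _ _ HC _ Ht) (s_lip _ _ _ _ _ _ HC _ Ht)
      (commutes_after_id _) (commutes_after_upd _ _ _ (le_n _)) (fun _ _ => eq_refl)
      ltac:(lia) ltac:(apply Rinv_0_lt_compat; lra)) as [al [be [Hal [Hbe Hrec]]]].
    exists al, be. auto.
Qed.

Lemma malliavin_moment T K b bx s sx p : 0 < T -> coeff_bounds T K b bx s sx -> 0 < p ->
  exists C, forall (n : nat) (x : R), (1 <= n)%nat ->
  forall k m : nat, (1 <= k <= m)%nat -> (m <= n)%nat ->
  Erad n (fun e => rpow (Rabs (Dmal T n k (fun e' => Xn T n b s x e' m) e)) p) <= C.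
Proof.
  intros HT HC Hp. destruct (exists_pow2_ge p) as [r Hr]. pose proof (K_pos _ _ _ _ _ _ HC).
  set (B := moment_const T K r K 0).
  exists (1 + B). intros n x Hn k m Hkm Hmn.
  set (h := step T n). assert (Hh : 0 < h) by (apply step_pos; auto).
  assert (Hsh : 0 < sqrt h) by (apply sqrt_lt_R0; lra).
  set (Y := path_gap T n b s x (fun e => upd e k 1) (fun e => upd e k (-1))
              (fun _ => / (2 * sqrt h))).
  apply Rle_trans with (Erad n (fun e => 1 + (Y m e ^ 2) ^ (2 ^ r))).
  { apply Erad_le. intros e _. apply rpow_abs_le; auto. }
  rewrite Erad_plus_const. apply Rplus_le_compat_l.
  rewrite (Erad_indep m n) by (try lia; intros; unfold Y;
    rewrite (path_gap_upd_after _ _ _ _ _ _ _ _ k);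
    auto using commutes_after_upd; lia).
  destruct k as [|k']; [lia|].
  apply (linear_recursion_moment_hom Y (S k') m h T K K r); auto;
    try apply step_le; try lia; try lra.
  - apply step_mul_le; auto; lia.
  - intros e _. unfold Y, path_gap. rewrite !Xn_upd_succ. unfold euler. fold h.
    replace (_ * / (2 * sqrt h)) with (s (tj T n (S k')) (Xn T n b s x e k')) by (field; lra).
    apply (s_bound _ _ _ _ _ _ HC). apply tj_range; auto; lia.
  - intros j Hj e _. assert (Ht := tj_range T n (S j) HT Hn ltac:(lia)).
    destruct (path_gap_recursion T n b s K x (fun e => upd e (S k') 1)
      (fun e => upd e (S k') (-1)) (fun _ => / (2 * sqrt h)) (S k') j e
      (b_lip _ _ _ _ _ _ HC _ Ht) (s_lip _ _ _ _ _ _ HC _ Ht)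
      (commutes_after_upd _ _ _ (le_n _)) (commutes_after_upd _ _ _ (le_n _))
      (fun _ _ => eq_refl) ltac:(lia) ltac:(apply Rinv_0_lt_compat; lra))
      as [al [be [Hal [Hbe Hrec]]]].
    exists al, be. auto.
Qed.

Section TangentProcess.

Variables (T K : R) (b bx s sx : R -> R -> R) (n : nat) (x : R) (k : nat).
Hypotheses (HT : 0 < T) (HC : coeff_bounds T K b bx s sx) (Hn : (1 <= n)%nat)
  (Hkn : (k < n)%nat).

Definition sig (e : nat -> R) : R := s (tj T n (S k)) (Xn T n b s x e k).

(* [Ugap j e] is [D^n_{k+1} X^n_{t_j} / sigma(t_{k+1}, X^n_{t_k})]. *)
Definition Ugap : nat -> (nat -> R) -> R :=
  path_gap T n b s x (fun e => upd e (S k) 1) (fun e => upd e (S k) (-1))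
    (fun e => / (2 * sqrt (step T n) * sig e)).

Definition Wtan (j : nat) (e : nat -> R) : R :=
  (NablaFrom T n b s bx sx k (Xn T n b s x e k) e (j - k) - Ugap j e) / sqrt (step T n).

Lemma sig_bounds e : 0 < sig e <= K.
Proof.
  assert (Ht : 0 <= tj T n (S k) <= T) by (apply tj_range; auto; lia).
  split; [apply (s_pos _ _ _ _ _ _ HC); auto|].
  eapply Rle_trans; [apply Rle_abs | apply (s_bound _ _ _ _ _ _ HC); auto].
Qed.

Lemma sig_upd_after e i w : (k < i)%nat -> sig (upd e i w) = sig e.
Proof. intros. unfold sig. rewrite Xn_upd_after by lia. reflexivity. Qed.

Lemma step_sqrt_pos : 0 < sqrt (step T n).
Proof. apply sqrt_lt_R0, step_pos; auto. Qed.

Lemma Ugap_start e : Ugap (S k) e = 1.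
Proof.
  pose proof (sig_bounds e). pose proof step_sqrt_pos.
  unfold Ugap, path_gap. rewrite !Xn_upd_succ. unfold euler, sig in *. field. split; lra.
Qed.

Lemma Ugap_moment r j : (S k <= j <= n)%nat ->
  Erad j (fun e => (Ugap j e ^ 2) ^ (2 ^ r)) <= moment_const T K r 1 0.
Proof.
  intros Hj. pose proof step_sqrt_pos. pose proof (K_pos _ _ _ _ _ _ HC).
  apply (linear_recursion_moment_hom Ugap (S k) n (step T n)); auto;
    try apply step_pos; try apply step_le; try apply step_mul_le; try lia; try lra.
  - intros e _. rewrite Ugap_start, Rabs_R1. lra.
  - intros j' Hj' e _. assert (Ht := tj_range T n (S j') HT Hn ltac:(lia)).
    pose proof (sig_bounds e).
    destruct (path_gap_recursion T n b s K x (fun e => upd e (S k) 1)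
      (fun e => upd e (S k) (-1)) (fun e => / (2 * sqrt (step T n) * sig e)) (S k) j' e
      (b_lip _ _ _ _ _ _ HC _ Ht) (s_lip _ _ _ _ _ _ HC _ Ht)
      (commutes_after_upd _ _ _ (le_n _)) (commutes_after_upd _ _ _ (le_n _))
      (fun e' w => f_equal (fun z => / (2 * sqrt (step T n) * z))
                      (sig_upd_after e' (S j') w ltac:(lia))) ltac:(lia)
      ltac:(apply Rinv_0_lt_compat; nra)) as [al [be [Hal [Hbe Hrec]]]].
    exists al, be. auto.
Qed.

Lemma Wtan_start e : signs (S k) e -> Rabs (Wtan (S k) e) <= K * (sqrt T + 1).
Proof.
  intros He. pose proof (K_pos _ _ _ _ _ _ HC).
  assert (Ht : 0 <= tj T n (k + 1) <= T) by (apply tj_range; auto; lia).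
  unfold Wtan. rewrite Ugap_start. replace (S k - k)%nat with 1%nat by lia. simpl.
  set (h := step T n). set (q := sqrt h).
  assert (Hq : 0 < q) by apply step_sqrt_pos.
  assert (Hqq : h = q * q) by (unfold q; rewrite sqrt_sqrt; [|left; apply step_pos]; auto).
  set (a := bx (tj T n (k + 1)) (Xn T n b s x e k)).
  set (c := sx (tj T n (k + 1)) (Xn T n b s x e k)).
  replace ((1 + h * a * 1 + q * c * 1 * e (k + 1)%nat - 1) / q) with (q * a + c * e (k + 1)%nat)
    by (rewrite Hqq; field; lra).
  assert (Rabs a <= K) by (apply (bx_bound _ _ _ _ _ _ HC); auto).
  assert (Rabs c <= K) by (apply (sx_bound _ _ _ _ _ _ HC); auto).
  assert (Rabs (e (k + 1)%nat) <= 1)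
    by (apply sign_abs_le1; replace (k + 1)%nat with (S k) by lia; apply He; lia).
  assert (q <= sqrt T) by (apply sqrt_le_1_alt, step_le; auto).
  eapply Rle_trans; [apply Rabs_triang|]. rewrite !Rabs_mult, (Rabs_pos_eq q) by lra.
  assert (q * Rabs a <= sqrt T * K) by (apply Rmult_le_compat; auto using Rabs_pos; lra).
  assert (Rabs c * Rabs (e (k + 1)%nat) <= K * 1)
    by (apply Rmult_le_compat; auto using Rabs_pos).
  lra.
Qed.

Lemma Wtan_recursion j e : (S k <= j < n)%nat -> signs j e -> exists al be r1 r2,
  Rabs al <= K * Rabs (Wtan j e) /\ Rabs be <= K * Rabs (Wtan j e) /\
  Rabs r1 <= step T n * (2 * K ^ 2 * Ugap j e ^ 2) /\
  Rabs r2 <= sqrt (step T n) * (2 * K ^ 2 * Ugap j e ^ 2) /\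
  forall w, (w = 1 \/ w = -1) -> Wtan (S j) (upd e (S j) w)
    = Wtan j e + step T n * al + sqrt (step T n) * be * w - r1 - r2 * w.
Proof.
  intros Hj He. pose proof (sig_bounds e) as Hsig.
  assert (Ht : 0 <= tj T n (S j) <= T) by (apply tj_range; auto; lia).
  set (h := step T n). set (q := sqrt h).
  assert (Hq : 0 < q) by apply step_sqrt_pos.
  assert (Hqq : h = q * q) by (unfold q; rewrite sqrt_sqrt; [|left; apply step_pos]; auto).
  set (t := tj T n (S j)). set (X0 := Xn T n b s x e j).
  set (Xp := Xn T n b s x (upd e (S k) 1) j). set (Xm := Xn T n b s x (upd e (S k) (-1)) j).
  assert (HX0 : X0 = Xp \/ X0 = Xm).
  { unfold X0. replace (Xn T n b s x e j) with (Xn T n b s x (upd e (S k) (e (S k))) j)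
      by (rewrite upd_self; reflexivity).
    destruct (He (S k) ltac:(lia)) as [-> | ->]; auto. }
  assert (HD : Xp - Xm = 2 * q * sig e * Ugap j e)
    by (unfold Ugap, path_gap; fold h q Xp Xm; field; lra).
  exists (bx t X0 * Wtan j e), (sx t X0 * Wtan j e),
    ((b t Xp - b t Xm - bx t X0 * (Xp - Xm)) / (2 * 1 * sig e)),
    ((s t Xp - s t Xm - sx t X0 * (Xp - Xm)) / (2 * q * sig e)).
  split; [|split; [|split; [|split]]].
  - rewrite Rabs_mult. apply Rmult_le_compat_r; [apply Rabs_pos|].
    apply (bx_bound _ _ _ _ _ _ HC); auto.
  - rewrite Rabs_mult. apply Rmult_le_compat_r; [apply Rabs_pos|].
    apply (sx_bound _ _ _ _ _ _ HC); auto.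
  - apply Rle_trans with (q ^ 2 / 1 * (2 * K ^ 2 * Ugap j e ^ 2));
      [|right; rewrite Hqq; field].
    apply remainder_div_le; auto; try lra. rewrite <- HD.
    apply (taylor_remainder_endpoint (b t) (bx t)); auto. apply (b_taylor _ _ _ _ _ _ HC); auto.
  - apply Rle_trans with (q ^ 2 / q * (2 * K ^ 2 * Ugap j e ^ 2));
      [|right; field; lra].
    apply remainder_div_le; auto; try lra. rewrite <- HD.
    apply (taylor_remainder_endpoint (s t) (sx t)); auto. apply (s_taylor _ _ _ _ _ _ HC); auto.
  - intros w _. unfold Wtan. rewrite NablaFrom_upd_succ by lia.
    unfold Ugap, path_gap. rewrite sig_upd_after by lia.
    rewrite (upd_comm e (S j) w (S k) 1), (upd_comm e (S j) w (S k) (-1)) by lia.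
    rewrite !Xn_upd_succ. unfold euler. fold h q t X0 Xp Xm.
    clearbody q h. subst h. field. lra.
Qed.

Lemma Wtan_moment r m : (S k <= m <= n)%nat ->
  Erad m (fun e => (Wtan m e ^ 2) ^ (2 ^ r))
  <= moment_const T K r (K * (sqrt T + 1))
       (((2 * K ^ 2) ^ 2) ^ (2 ^ r) * moment_const T K (S r) 1 0).
Proof.
  intros Hm. pose proof (K_pos _ _ _ _ _ _ HC).
  assert (0 <= moment_const T K (S r) 1 0) by (apply moment_const_ge0; lra).
  apply (linear_recursion_moment Wtan (fun j e => 2 * K ^ 2 * Ugap j e ^ 2) (S k) n (step T n));
    auto using Wtan_start, Wtan_recursion;
    try apply step_pos; try apply step_le; try apply step_mul_le; try lia; try lra.
  - pose proof (sqrt_pos T). nra.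
  - apply Rmult_le_pos; [apply pow_le, pow2_ge_0 | auto].
  - intros j Hj. eapply Rle_trans; [|apply Rmult_le_compat_l;
      [apply pow_le, pow2_ge_0 | apply (Ugap_moment (S r) j); lia]].
    rewrite <- Erad_scal. right. apply Erad_ext. intros e _.
    rewrite pow2_S, pow_mult, <- Rpow_mult_distr. f_equal. ring.
Qed.

Lemma Wtan_upd_after m e i v : (m < i)%nat -> (k < m)%nat ->
  Wtan m (upd e i v) = Wtan m e.
Proof.
  intros Hmi Hkm. unfold Wtan, Ugap.
  rewrite (path_gap_upd_after _ _ _ _ _ _ _ _ (S k)), Xn_upd_after, NablaFrom_upd_after
    by (auto using commutes_after_upd; try (intros; rewrite sig_upd_after; [reflexivity|]); lia).
  reflexivity.
Qed.

End TangentProcess.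

Lemma tangent_moment T K b bx s sx p : 0 < T -> coeff_bounds T K b bx s sx -> 0 < p ->
  exists C, forall (n : nat) (x : R), (1 <= n)%nat ->
  forall k m : nat, (k < m <= n)%nat ->
  Erad n (fun e => rpow (Rabs
     (NablaFrom T n b s bx sx k (Xn T n b s x e k) e (m - k)
      - Dmal T n (S k) (fun e' => Xn T n b s x e' m) e
        / s (tj T n (S k)) (Xn T n b s x e k))) p)
    <= C * rpow (step T n) (p / 2).
Proof.
  intros HT HC Hp. destruct (exists_pow2_ge p) as [r Hr].
  exists (1 + moment_const T K r (K * (sqrt T + 1))
                (((2 * K ^ 2) ^ 2) ^ (2 ^ r) * moment_const T K (S r) 1 0)).
  intros n x Hn k m Hkm.
  pose proof (step_sqrt_pos T n HT Hn).
  apply (Erad_rpow_sqrt_le n r (step T n) p _ _ (Wtan T b bx s sx n x k m));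
    auto using step_pos.
  - intros e. pose proof (sig_bounds T K b bx s sx n x k HT HC Hn ltac:(lia) e).
    unfold Wtan, Ugap, path_gap, Dmal, sig in *. field. lra.
  - rewrite (Erad_indep m n) by (try lia; intros; rewrite Wtan_upd_after by lia; reflexivity).
    apply Wtan_moment; auto; lia.
Qed.

Theorem mainTheorem11 (T gamma delta p : R) (b bx bxx s sx sxx : R -> R -> R) :
  0 < T ->
  AssumptionA T gamma delta b bx bxx s sx sxx ->
  2 <= p ->
  exists C : R,
    forall (n : nat) (x : R), (1 <= n)%nat ->
    (forall l m : nat, (1 <= l <= n)%nat -> (1 <= m <= n)%nat ->
       forall v : R, (v = 1 \/ v = -1) ->
       Erad n (fun e => rpow (Rabs (Xn T n b s x e l
                                    - Tshift m v (fun e' => Xn T n b s x e' l) e)) p)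
         <= C * rpow (step T n) (p / 2)) /\
    (forall k m : nat, (k < m <= n)%nat ->
       Erad n (fun e => rpow (Rabs
          (NablaFrom T n b s bx sx k (Xn T n b s x e k) e (m - k)
           - Dmal T n (S k) (fun e' => Xn T n b s x e' m) e
             / s (tj T n (S k)) (Xn T n b s x e k))) p)
         <= C * rpow (step T n) (p / 2)) /\
    (forall k m : nat, (1 <= k <= m)%nat -> (m <= n)%nat ->
       Erad n (fun e => rpow (Rabs (Dmal T n k (fun e' => Xn T n b s x e' m) e)) p)
         <= C).
Proof.
  intros HT HA Hp.
  destruct (coeff_bounds_of_assumptionA _ _ _ _ _ _ _ _ _ HA) as [K HC].
  destruct (flip_moment T K b bx s sx p HT HC ltac:(lra)) as [C1 H1].
  destruct (tangent_moment T K b bx s sx p HT HC ltac:(lra)) as [C2 H2].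
  destruct (malliavin_moment T K b bx s sx p HT HC ltac:(lra)) as [C3 H3].
  exists (Rmax C1 (Rmax C2 C3)). intros n x Hn.
  pose proof (rpow_ge0 (step T n) (p / 2)).
  pose proof (Rmax_l C1 (Rmax C2 C3)). pose proof (Rmax_r C1 (Rmax C2 C3)).
  pose proof (Rmax_l C2 C3). pose proof (Rmax_r C2 C3).
  split; [|split]; intros.
  - eapply Rle_trans; [apply H1; auto|]. apply Rmult_le_compat_r; lra.
  - eapply Rle_trans; [apply H2; auto|]. apply Rmult_le_compat_r; lra.
  - eapply Rle_trans; [apply H3; auto|]. lra.
Qed.
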